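(* Let $H$ be a group such that the cardinal $|H|$ has uncountable cofinality. Then the following are equivalent: (1) $H$ is strongly bounded and J\'onsson; (2) for every $Y \subseteq H$ with $|Y| = |H|$ there exists $n_Y \in \omega$ such that $H = Y^{[n_Y]}$.
   Context: A group $H$ is J\'onsson if every proper subgroup of $H$ has cardinality strictly smaller than $|H|$. A group $H$ is strongly bounded if every action of $H$ by isometries on a metric space has bounded orbits. For $Y \subseteq H$, $Y^{[n]}$ denotes the set of all products $g_1^{\varepsilon_1}\cdots g_m^{\varepsilon_m}$ with $0 \le m \le n$, $g_i \in Y$, $\varepsilon_i \in \{-1,1\}$ (the empty product being $1_H$). The cofinality of a cardinal $\kappa$ is the least cardinality of an unbounded subset of $\kappa$. *)

From HB Require Import structures.
From mathcomp Require Import all_boot.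
From mathcomp Require Import boolp classical_sets cardinality.
From Stdlib Require Import Reals.
Set Implicit Arguments. Unset Strict Implicit. Unset Printing Implicit Defensive.
Local Open Scope classical_set_scope.
Local Open Scope card_scope.

Record AbsGroup := MkGroup {
  gcar :> Type;
  gmul : gcar -> gcar -> gcar;
  ginv : gcar -> gcar;
  gone : gcar;
  gmulA : forall x y z, gmul x (gmul y z) = gmul (gmul x y) z;
  gmul1l : forall x, gmul gone x = x;
  gmul1r : forall x, gmul x gone = x;
  gmulVl : forall x, gmul (ginv x) x = gone;
  gmulVr : forall x, gmul x (ginv x) = gone
}.

Section Defs.
Variable H : AbsGroup.

Definition is_subgroup (S : set H) : Prop :=
  S (gone H) /\ (forall x y, S x -> S y -> S (gmul x y)) /\
  (forall x, S x -> S (ginv x)).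

Definition card_lt_H (A : set H) : Prop :=
  (A #<= [set: H]) /\ ~ ([set: H] #<= A).

Definition Jonsson : Prop :=
  forall S : set H, is_subgroup S -> S <> [set: H] -> card_lt_H S.

Definition is_metric (X : Type) (d : X -> X -> R) : Prop :=
  (forall x y, (0 <= d x y)%R) /\
  (forall x y, d x y = 0%R <-> x = y) /\
  (forall x y, d x y = d y x) /\
  (forall x y z, (d x z <= d x y + d y z)%R).

Definition isometric_action (X : Type) (d : X -> X -> R) (act : H -> X -> X) : Prop :=
  (forall x, act (gone H) x = x) /\
  (forall g h x, act (gmul g h) x = act g (act h x)) /\
  (forall g x y, d (act g x) (act g y) = d x y).

Definition bounded_orbits (X : Type) (d : X -> X -> R) (act : H -> X -> X) : Prop :=
  forall x : X, exists M : R, forall g : H, (d x (act g x) <= M)%R.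

Definition strongly_bounded : Prop :=
  forall (X : Type) (d : X -> X -> R) (act : H -> X -> X),
    is_metric d -> isometric_action d act -> bounded_orbits d act.

(* Y^[n]: products g_1^{e_1} ... g_m^{e_m}, m <= n, g_i in Y, e_i in {-1,1}
   (true = exponent 1, false = exponent -1); the empty product is 1. *)
Definition sgn_pow (p : H * bool) : H := if p.2 then p.1 else ginv p.1.

Definition word_prod (l : seq (H * bool)) : H :=
  foldr (fun p acc => gmul (sgn_pow p) acc) (gone H) l.

Definition word_ball (Y : set H) (n : nat) : set H :=
  [set x | exists l : seq (H * bool),
      (size l <= n)%N /\ (forall p, List.In p l -> Y p.1) /\ x = word_prod l].

(* Cardinals are von Neumann
   initial ordinals; we transport |H| onto H via a strict well-ordering R of
   H of order type |H| (every proper initial segment has cardinality < |H|).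
   Unbounded subsets of |H| then correspond to cofinal subsets of (H, R), and
   "cf(|H|) is uncountable" says every countable subset of H is bounded,
   i.e. has a strict upper bound in (H, R). *)
Definition strict_well_order (Rl : H -> H -> Prop) : Prop :=
  (forall x, ~ Rl x x) /\
  (forall x y z, Rl x y -> Rl y z -> Rl x z) /\
  (forall x y, Rl x y \/ x = y \/ Rl y x) /\
  well_founded Rl.

Definition uncountable_cofinality : Prop :=
  exists Rl : H -> H -> Prop,
    strict_well_order Rl /\
    (forall a : H, card_lt_H [set x | Rl x a]) /\
    (forall X : set H, countable X -> exists a : H, forall x, X x -> Rl x a).

End Defs.

From mathcomp Require Import all_boot.
From mathcomp Require Import boolp classical_sets cardinality functions.
From Stdlib Require Import Reals Lra ClassicalEpsilon.
Set Implicit Arguments. Unset Strict Implicit. Unset Printing Implicit Defensive.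
Local Open Scope classical_set_scope.
Local Open Scope card_scope.

(* (1) => (2): by the Jonsson property a set Y of full cardinality generates H,
   so the word length with respect to Y is a left-invariant metric on H; the
   orbit of 1 under left multiplication is bounded, i.e. H = Y^[n].
   (2) => (1): a proper subgroup S of full cardinality would give H = S^[n] <= S.
   For an isometric action and a point x, the sets B_k = {g | d(x, gx) <= k}
   cover H; as cf|H| > omega some B_k has cardinality |H|, and H = B_k^[n]
   moves x by at most nk.  The cardinal step: were every B_k small, each would
   embed in an initial segment [< y_k] of a well-order of type |H|, the y_k are
   bounded by some a, and omega x [< a] embeds in a further segment [< b]. *)

Section GroupFacts.
Variable H : AbsGroup.
Implicit Types (x y : H) (Y S : set H) (l : seq (H * bool)).

Lemma ginv_unique x y : gmul x y = gone H -> y = ginv x.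
Proof. by move=> e; rewrite -(gmul1l y) -(gmulVl x) -gmulA e gmul1r. Qed.

Lemma ginvK x : ginv (ginv x) = x.
Proof. by symmetry; apply: ginv_unique; rewrite gmulVl. Qed.

Lemma ginvM x y : ginv (gmul x y) = gmul (ginv y) (ginv x).
Proof.
by symmetry; apply: ginv_unique; rewrite -gmulA (gmulA y) gmulVr gmul1l gmulVr.
Qed.

Lemma ginv1 : ginv (gone H) = gone H.
Proof. by symmetry; apply: ginv_unique; rewrite gmul1l. Qed.

Lemma gmulV_eq1 x y : gmul (ginv x) y = gone H -> x = y.
Proof. by move=> /ginv_unique ->; rewrite ginvK. Qed.

Lemma word_prod_cat l1 l2 :
  word_prod (l1 ++ l2) = gmul (word_prod l1) (word_prod l2).
Proof. by elim: l1 => [|p l IH] /=; rewrite ?gmul1l // IH gmulA. Qed.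

Lemma word_ball1 Y n : word_ball Y n (gone H).
Proof. by exists [::]. Qed.

Lemma word_ball0 Y x : word_ball Y 0 x -> x = gone H.
Proof. by move=> [[|p l] [s [_ ->]]]. Qed.

Lemma word_ball_gen Y y : Y y -> word_ball Y 1 y.
Proof.
move=> Yy; exists [:: (y, true)]; split=> //; split; last by rewrite /= gmul1r.
by move=> p [<-|[]].
Qed.

Lemma word_ball_le Y m n x : (m <= n)%N -> word_ball Y m x -> word_ball Y n x.
Proof. by move=> mn [l [s [Yl ->]]]; exists l; split=> //; apply: leq_trans mn. Qed.

Lemma word_ball_mul Y m n x y :
  word_ball Y m x -> word_ball Y n y -> word_ball Y (m + n) (gmul x y).
Proof.
move=> [l1 [s1 [Y1 ->]]] [l2 [s2 [Y2 ->]]].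
exists (l1 ++ l2); split; first by rewrite size_cat leq_add.
split; last by rewrite word_prod_cat.
by move=> p pl; case: (List.in_app_or _ _ _ pl) => [/Y1|/Y2].
Qed.

Lemma word_ball_inv Y n x : word_ball Y n x -> word_ball Y n (ginv x).
Proof.
move=> [l [sl [Yl ->]]]; elim: l n sl Yl => [|p l IH] n sl Yl /=.
  by rewrite ginv1; apply: word_ball1.
have [l' [sl' [Yl' el']]] := IH _ (leqnn _) (fun q ql => Yl q (or_intror ql)).
exists (l' ++ [:: (p.1, ~~ p.2)]); split.
  by rewrite size_cat addn1 (leq_trans _ sl) ?ltnS.
split=> [q ql|].
  case: (List.in_app_or _ _ _ ql) => [/Yl' //|[<-|[]]].
  exact: (Yl p (or_introl erefl)).
rewrite word_prod_cat -el' ginvM /= gmul1r; congr gmul.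
by rewrite /sgn_pow; case: p.2 => /=; rewrite ?ginvK.
Qed.

Lemma word_ball_subgroup S n x : is_subgroup S -> word_ball S n x -> S x.
Proof.
move=> [S1 [SM SV]] [l [_ [Sl ->]]]; elim: l Sl => [|p l IH] Sl //=.
apply: SM; last by apply: IH => q ql; apply: Sl; right.
by have := Sl p (or_introl erefl); rewrite /sgn_pow; case: p.2 => //; apply: SV.
Qed.

End GroupFacts.

Definition word_closure (H : AbsGroup) (Y : set H) : set H :=
  [set x | exists n, word_ball Y n x].

Lemma word_closure_subgroup (H : AbsGroup) (Y : set H) : is_subgroup (word_closure Y).
Proof.
split; first by exists 0%N; apply: word_ball1.
split; first by move=> x y [m xm] [n yn]; exists (m + n)%N; apply: word_ball_mul.
by move=> x [n xn]; exists n; apply: word_ball_inv.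
Qed.

Lemma Jonsson_word_closure (H : AbsGroup) (Y : set H) :
  Jonsson H -> Y #= [set: H] -> word_closure Y = [set: H].
Proof.
move=> jonsson YH; apply: contrapT => Y_proper.
have [_] := jonsson _ (word_closure_subgroup Y) Y_proper; apply.
have [_ HY] := proj1 (card_eqPle _ _) YH.
apply: card_le_trans HY _; apply: subset_card_le => y Yy.
by exists 1%N; apply: word_ball_gen.
Qed.

Section WordMetric.
Variables (H : AbsGroup) (Y : set H).
Hypothesis Y_generates : word_closure Y = [set: H].
Implicit Types x y : H.

Lemma word_length_subproof x : exists n, `[< word_ball Y n x >].
Proof.
have [n xn] : word_closure Y x by rewrite Y_generates.
by exists n; apply/asboolP.
Qed.

Definition word_length x : nat := ex_minn (word_length_subproof x).

Lemma word_length_ball x : word_ball Y (word_length x) x.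
Proof. by rewrite /word_length; case: ex_minnP => m /asboolP. Qed.

Lemma word_length_min x n : word_ball Y n x -> (word_length x <= n)%N.
Proof.
by move=> xn; rewrite /word_length; case: ex_minnP => m _; apply; apply/asboolP.
Qed.

Lemma word_length_eq0 x : word_length x = 0%N <-> x = gone H.
Proof.
split=> [x0|->].
  by apply: (@word_ball0 _ Y); rewrite -x0; apply: word_length_ball.
by apply/eqP; rewrite -leqn0; apply/word_length_min/word_ball1.
Qed.

Lemma word_lengthV x : word_length (ginv x) = word_length x.
Proof.
apply/eqP; rewrite eqn_leq !word_length_min //.
  by rewrite -[x in word_ball _ _ x]ginvK; apply: word_ball_inv (word_length_ball _).
exact: word_ball_inv (word_length_ball _).
Qed.

Lemma word_lengthM x y :
  (word_length (gmul x y) <= word_length x + word_length y)%N.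
Proof. by apply/word_length_min/word_ball_mul; apply: word_length_ball. Qed.

Definition word_dist x y : R := INR (word_length (gmul (ginv x) y)).

Lemma word_dist_metric : is_metric word_dist.
Proof.
split; first by move=> x y; apply: pos_INR.
split.
  move=> x y; rewrite /word_dist.
  split=> [/(@INR_eq _ 0)/word_length_eq0/gmulV_eq1 //|<-].
  by rewrite gmulVl (proj2 (word_length_eq0 _)).
split.
  by move=> x y; rewrite /word_dist -word_lengthV ginvM ginvK.
move=> x y z; rewrite /word_dist -plus_INR; apply/le_INR/leP.
have -> : gmul (ginv x) z = gmul (gmul (ginv x) y) (gmul (ginv y) z).
  by rewrite -gmulA (gmulA y) gmulVr gmul1l.
exact: word_lengthM.
Qed.

Lemma word_dist_isometric : isometric_action word_dist (@gmul H).
Proof.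
split; first exact: gmul1l.
split; first by move=> g h x; rewrite gmulA.
by move=> g x y; rewrite /word_dist ginvM -gmulA (gmulA (ginv g)) gmulVl gmul1l.
Qed.

Lemma strongly_bounded_word_ball :
  strongly_bounded H -> exists n, word_ball Y n = [set: H].
Proof.
move=> bounded.
have [M hM] := bounded _ _ _ word_dist_metric word_dist_isometric (gone H).
have [n hn] := INR_archimed 1 M Rlt_0_1.
exists n; apply/seteqP; split=> // g _; apply: word_ball_le (word_length_ball g).
have := hM g; rewrite /word_dist ginv1 gmul1l gmul1r => hg.
by apply/ltnW/ltP/INR_lt; lra.
Qed.

End WordMetric.

Lemma isometric_action_word_ball (H : AbsGroup) (X : Type) (d : X -> X -> R)
    (act : H -> X -> X) (Y : set H) (x : X) (k : R) n g :
  is_metric d -> isometric_action d act -> (0 <= k)%R ->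
  (forall y, Y y -> (d x (act y x) <= k)%R) ->
  word_ball Y n g -> (d x (act g x) <= INR n * k)%R.
Proof.
move=> [_ [d_eq0 [d_sym d_tri]]] [act1 [actM act_iso]] k_ge0 Yk [l [ln [Yl ->]]].
apply: Rle_trans (Rmult_le_compat_r _ _ _ k_ge0 (le_INR _ _ (elimT leP ln))).
elim: l Yl {ln} => [|p l IH] Yl.
  by rewrite /= act1 (proj2 (d_eq0 x x)) //; lra.
have p_k : (d x (act (sgn_pow p) x) <= k)%R.
  have Yp := Yk _ (Yl p (or_introl erefl)).
  by rewrite /sgn_pow; case: p.2 => //; rewrite -(act_iso p.1) -actM gmulVr act1 d_sym.
have l_k := IH (fun q ql => Yl q (or_intror ql)).
have := d_tri x (act (sgn_pow p) x) (act (sgn_pow p) (act (word_prod l) x)).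
have -> : word_prod (p :: l) = gmul (sgn_pow p) (word_prod l) by [].
by rewrite act_iso actM (S_INR (size l)); lra.
Qed.

Lemma Jonsson_of_word_ball (H : AbsGroup) :
  (forall Y : set H, Y #= [set: H] -> exists n, word_ball Y n = [set: H]) ->
  Jonsson H.
Proof.
move=> full S S_subgroup S_proper; split; first exact: card_leT.
move=> HS; have [n Sn] := full S (Cantor_Bernstein (card_leT _) HS).
apply: S_proper; apply/seteqP; split=> // y _.
by apply: (word_ball_subgroup (n := n)); rewrite ?Sn.
Qed.

Lemma strongly_bounded_of_word_ball (H : AbsGroup) :
  (forall B : nat -> set H, (forall g, exists k, B k g) ->
     exists k, [set: H] #<= B k) ->
  (forall Y : set H, Y #= [set: H] -> exists n, word_ball Y n = [set: H]) ->
  strongly_bounded H.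
Proof.
move=> large_piece full X d act d_metric act_iso x.
pose B k g := (d x (act g x) <= INR k)%R.
have [k HBk] : exists k, [set: H] #<= B k.
  apply: large_piece => g; have [k hk] := INR_archimed 1 (d x (act g x)) Rlt_0_1.
  by exists k; rewrite /B; lra.
have [n Bn] := full (B k) (Cantor_Bernstein (card_leT _) HBk).
exists (INR n * INR k)%R => g.
apply: (isometric_action_word_ball (Y := B k) d_metric act_iso (pos_INR k)) => //.
by rewrite Bn.
Qed.

Lemma set_inj_card_le T U (A : set T) (B : set U) (f : T -> U) :
  set_fun A B f -> set_inj A f -> A #<= B.
Proof.
move=> fAB f_inj; have [g] : $|{injfun A >-> B}| by apply/injfunPex; exists f.
exact: inj_card_le.
Qed.

Lemma bigcup_card_le_setX T U (B : nat -> set T) (C : set U) :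
  (forall k, B k #<= C) -> \bigcup_k B k #<= [set: nat] `*` C.
Proof.
elim/Ppointed: U => U in C *.
  move=> BC; rewrite bigcup0 ?card_ge0 // => k _.
  by apply/(@card_le0P _ U); rewrite -(empty_eq0 C).
move=> BC.
have /choice[f f_inj] :
    forall k, exists f : T -> U, set_fun (B k) C f /\ set_inj (B k) f.
  by move=> k; have /pcard_leP/injfunPex[f] := BC k; exists f.
have /choice[i iB] : forall x, exists k, (\bigcup_k B k) x -> B k x.
  move=> x; case: (pselect ((\bigcup_k B k) x)) => [[k _ Bkx]|nx].
    by exists k.
  by exists 0%N.
apply: (set_inj_card_le (f := fun x => (i x, f (i x) x))) => [x /iB Bx|x y].
  by split=> //; apply: (f_inj _).1.
rewrite !inE => /iB Bx /iB By [ixy]; rewrite -ixy in By *.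
by apply: (f_inj (i x)).2; rewrite inE.
Qed.

Section WellOrder.
Variables (T : Type) (lt : T -> T -> Prop).
Hypotheses (lt_irr : forall x, ~ lt x x)
  (lt_trans : forall x y z, lt x y -> lt y z -> lt x z)
  (lt_total : forall x y, lt x y \/ x = y \/ lt y x)
  (lt_wf : well_founded lt).

Definition initial_segment (a : T) : set T := [set x | lt x a].

Lemma well_founded_minimal (P : T -> Prop) :
  (exists x, P x) -> exists2 m, P m & forall z, lt z m -> ~ P z.
Proof.
move=> [x Px]; apply: contrapT => no_min.
suff : forall y, ~ P y by move/(_ x).
apply: (well_founded_ind lt_wf) => y IH Py.
by apply: no_min; exists y => // z /IH.
Qed.

(* Enumerate A by transfinite recursion, e(y) being an element of A not among
   the e(z), z < y: either this never gets stuck and e embeds T into A, or at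
   some y the values e(z), z < y, exhaust A. *)
Lemma card_le_or_initial_segment (A : set T) :
  [set: T] #<= A \/ exists a, A #<= initial_segment a.
Proof.
pose fresh y (rec : forall z, lt z y -> T) :=
  epsilon (inhabits y) (fun a => A a /\ forall z (zy : lt z y), rec z zy <> a).
pose e := Fix lt_wf (fun _ => T) fresh.
have eE y : e y = fresh y (fun z _ => e z).
  apply: Fix_eq => {}y f g fg; rewrite /fresh; congr epsilon.
  apply: funext => a; apply: propext.
  by split=> -[Aa fresh_a]; split=> // z zy; rewrite ?fg // -fg.
case: (pselect (forall y, exists a, A a /\ forall z, lt z y -> e z <> a)) => [ok|stuck].
  left.
  have eA y : A (e y) /\ forall z, lt z y -> e z <> e y.
    rewrite eE /fresh; have [a [Aa a_new]] := ok y.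
    have [|Ae e_new] := epsilon_spec (inhabits y)
      (fun a => A a /\ forall z (zy : lt z y), e z <> a).
      by exists a; split=> // z zy; apply: a_new.
    by split=> // z zy; apply: e_new.
  apply: (set_inj_card_le (f := e)) => [y _|x y _ _ exy]; first exact: (eA y).1.
  case: (lt_total x y) => [xy|[//|yx]]; first by case: ((eA y).2 x xy).
  by case: ((eA x).2 y yx).
right.
have [y A_sub] : exists y, forall a, A a -> exists2 z, lt z y & e z = a.
  apply: contrapT => no_y; apply: stuck => y; apply: contrapT => y_stuck.
  apply: no_y; exists y => a Aa; apply: contrapT => a_new; apply: y_stuck.
  by exists a; split=> // z zy eza; apply: a_new; exists z.
have /choice[g gP] : forall a, exists z, A a -> lt z y /\ e z = a.
  move=> a; case: (pselect (A a)) => [/A_sub[z zy eza]|nAa]; first by exists z.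
  by exists y.
exists y; apply: (set_inj_card_le (f := g)) => [a /gP[]//|a b].
rewrite !inE => /gP[_ ea] /gP[_ eb] gab.
by rewrite -ea -eb gab.
Qed.

Section Cofinality.
Hypothesis lt_cof :
  forall X : set T, countable X -> exists a, forall x, X x -> lt x a.

Definition succ (x : T) : T :=
  epsilon (inhabits x) (fun m => lt x m /\ forall z, lt z m -> ~ lt x z).

Lemma succP x : lt x (succ x) /\ forall z, lt z (succ x) -> ~ lt x z.
Proof.
apply: (epsilon_spec (inhabits x) (fun m => lt x m /\ forall z, lt z m -> ~ lt x z)).
have [|m xm m_min] := @well_founded_minimal (lt x).
  by have [b xb] := lt_cof (countable1 x); exists b; apply: xb.
by exists m.
Qed.

Lemma lt_succ x : lt x (succ x). Proof. exact: (succP x).1. Qed.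

Lemma succ_le x y : lt x y -> succ x = y \/ lt (succ x) y.
Proof.
move=> xy; case: (lt_total (succ x) y) => [|[|yx]]; [by right|by left|].
by case: ((succP x).2 y yx).
Qed.

Lemma succ_mono x y : lt x y -> lt (succ x) (succ y).
Proof.
by move=> /succ_le[->|sxy]; [|apply: lt_trans sxy _]; apply: lt_succ.
Qed.

Lemma succ_inj : injective succ.
Proof.
move=> x y sxy; case: (lt_total x y) => [|[//|]] /succ_mono; rewrite sxy => /lt_irr [].
Qed.

Lemma iter_succ_mono n x y : lt x y -> lt (iter n succ x) (iter n succ y).
Proof. by elim: n => [|n IH] //= /IH; apply: succ_mono. Qed.

Lemma iter_succ_ge n x : x = iter n succ x \/ lt x (iter n succ x).
Proof.
elim: n => [|n [IH|IH]] /=; [by left|right|right]; rewrite -?IH; first exact: lt_succ.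
exact: lt_trans IH (lt_succ _).
Qed.

Definition not_succ (l : T) : Prop := forall y, succ y <> l.

Lemma iter_succ_decomp x : exists2 l, not_succ l & exists n, x = iter n succ l.
Proof.
elim/(well_founded_ind lt_wf): x => x IH.
case: (pselect (exists y, succ y = x)) => [[y sy]|not_sx]; last first.
  by exists x; [move=> y sy; apply: not_sx; exists y|exists 0%N].
have := IH y; rewrite -sy => /(_ (lt_succ y))[l nl [n ->]].
by exists l => //; exists n.+1.
Qed.

Lemma iter_succ_inj m n l l' : not_succ l -> not_succ l' ->
  iter m succ l = iter n succ l' -> m = n /\ l = l'.
Proof.
move=> nl nl'; elim: m n => [|m IH] [|n] //= e.
- by case: (nl _ (esym e)).
- by case: (nl' _ e).
- by have [-> ->] := IH n (succ_inj e).
Qed.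

(* Writing x = succ^n(l) with l not a successor and <k, n> = pickle (k, n),
   the map (k, x) |-> succ^<k, n>(l) is injective, and it is bounded because
   the countably many succ^p(a) are. *)
Lemma card_le_nat_initial_segment a :
  exists b, [set: nat] `*` initial_segment a #<= initial_segment b.
Proof.
have /choice[d dP] : forall x, exists ln : T * nat,
    not_succ ln.1 /\ x = iter ln.2 succ ln.1.
  by move=> x; have [l nl [n xn]] := iter_succ_decomp x; exists (l, n).
have [b b_ub] := lt_cof (card_image_le (fun p => iter p succ a) [set: nat]).
exists b; pose F (kx : nat * T) := iter (pickle (kx.1, (d kx.2).2)) succ (d kx.2).1.
apply: (set_inj_card_le (f := F)) => [[k x] [_ xa]|[k x] [k' x'] _ _].
  have dxa : lt (d x).1 a.
    case: (iter_succ_ge (d x).2 (d x).1) => dx; rewrite -(dP x).2 in dx.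
      by rewrite dx.
    exact: lt_trans dx xa.
  by apply: lt_trans (iter_succ_mono _ dxa) (b_ub _ _); exists (pickle (k, (d x).2)).
rewrite /F => /iter_succ_inj[]; try exact: (dP _).1.
move=> /(pcan_inj pickleK)[-> en] el.
by rewrite (dP x).2 (dP x').2 /= en el.
Qed.

Lemma countable_cover_large :
  (forall a, ~ ([set: T] #<= initial_segment a)) ->
  forall B : nat -> set T, (forall x, exists k, B k x) ->
    exists k, [set: T] #<= B k.
Proof.
move=> seg_small B B_cover; apply: contrapT => no_large.
have /choice[y By] : forall k, exists y, B k #<= initial_segment y.
  move=> k; case: (card_le_or_initial_segment (B k)) => // TB.
  by case: no_large; exists k.
have [a y_ub] := lt_cof (card_image_le y [set: nat]).
have [b Hab] := card_le_nat_initial_segment a.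
apply: (seg_small b); apply: card_le_trans Hab.
have -> : [set: T] = \bigcup_k B k.
  by apply/seteqP; split=> // x _; have [k Bkx] := B_cover x; exists k.
apply: bigcup_card_le_setX => k; apply: card_le_trans (By k) _.
by apply: subset_card_le => x xy; apply: lt_trans xy (y_ub _ _); exists k.
Qed.

End Cofinality.
End WellOrder.

Lemma uncountable_cofinality_cover (H : AbsGroup) : uncountable_cofinality H ->
  forall B : nat -> set H, (forall g, exists k, B k g) ->
    exists k, [set: H] #<= B k.
Proof.
move=> [lt [[lt_irr [lt_trans [lt_total lt_wf]]] [seg_small lt_cof]]].
by apply: countable_cover_large => // a; apply: (seg_small a).2.
Qed.

Theorem lemma2p2 (H : AbsGroup) :
  uncountable_cofinality H ->
  ((strongly_bounded H /\ Jonsson H) <->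
   (forall Y : set H, Y #= [set: H] ->
      exists nY : nat, word_ball Y nY = [set: H])).
Proof.
move=> cof; split=> [[bounded jonsson] Y YH|full].
  exact: strongly_bounded_word_ball (Jonsson_word_closure jonsson YH) bounded.
split; last exact: Jonsson_of_word_ball.
exact: strongly_bounded_of_word_ball (uncountable_cofinality_cover cof) full.
Qed.
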